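(* Fix a positive integer $n$, a nonzero $n$-partition $\lambda$ with $\lambda_n=0$, an $n$-semistandard tableau $T$ of shape $\lambda$, a column $1\le l<\lambda_1$, and a location $(j,i)>(l,1)$ in reading order. If $1\le h<k\le c_l$, then the most recent value of $P(T;l,h)$ relative to $(j,i)$ is strictly smaller than the most recent value of $P(T;l,k)$ relative to $(j,i)$. (That is, the most recent value of $P(T;l,k)$ relative to $(j,i)$ decreases as $k$ decreases.)
   Context: Identify $\lambda=(\lambda_1,\dots,\lambda_n)$ (weakly decreasing nonnegative integers, $\lambda_n=0$, $\lambda\ne0$) with its Young diagram; $c_j$ is the length of column $j$; $(j,i)$ is the box in column $j$, row $i$. Reading order: $(l,k)\le(j,i)$ iff $l<j$, or $l=j$ and $k\ge i$. An $n$-semistandard tableau $T$ of shape $\lambda$ has entries in $[n]$, weakly increasing along rows, strictly increasing down columns; $T(j,i)$ is its entry. The EWIS of a sequence $x_1,x_2,\dots$ is $x_{a_1},x_{a_2},\dots$ with $a_1=1$ and $a_b$ the smallest index $>a_{b-1}$ with $x_{a_b}\ge x_{a_{b-1}}$. Scanning paths: for each column $l$ and $k=c_l,c_l-1,\dots,1$ in turn, delete the boxes of the previously computed $P(T;l,k')$, $k'>k$ (leaving a semistandard tableau of valid shape); form the sequence of entries in the lowest box of each of columns $l,\dots,\lambda_1$ of the current shape (skipping empty columns); $P(T;l,k)$ is the set of locations of the terms of its EWIS (it starts at $(l,k)$). For $(j,i)>(l,1)$, the most recent location of $P(T;l,k)$ relative to $(j,i)$ is the latest location (in reading order) of $P(T;l,k)$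 strictly before $(j,i)$, and the most recent value is the entry of $T$ there. *)

From mathcomp Require Import all_boot.
Set Implicit Arguments. Unset Strict Implicit. Unset Printing Implicit Defensive.

(* Conventions: a partition lam = (lam_1,...,lam_n) is a seq nat of size n,
   lam_i = nth 0 lam i.-1.  Boxes are (column, row) = (j, i), 1-indexed.
   A tableau is a function T : nat -> nat -> nat with T j i the entry in
   column j, row i; only its values on the boxes of lam matter. *)

Definition lam1 (lam : seq nat) : nat := head 0 lam.

Definition colht (lam : seq nat) (j : nat) : nat := count (fun x => j <= x) lam.

Definition box (lam : seq nat) (j i : nat) : bool :=
  (1 <= j <= lam1 lam) && (1 <= i <= colht lam j).

Definition is_sst (n : nat) (lam : seq nat) (T : nat -> nat -> nat) : Prop :=
  (forall j i, box lam j i -> 1 <= T j i <= n) /\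
  (forall j i, box lam j i -> box lam j.+1 i -> T j i <= T j.+1 i) /\
  (forall j i, box lam j i -> box lam j i.+1 -> T j i < T j i.+1).

(* reading order, strict: (l,k) < (j,i) iff l < j, or l = j and k > i *)
Definition rlt (p q : nat * nat) : bool :=
  (p.1 < q.1) || ((p.1 == q.1) && (q.2 < p.2)).

Fixpoint ewis_from (f : nat * nat -> nat) (cur : nat) (s : seq (nat * nat))
  : seq (nat * nat) :=
  match s with
  | [::] => [::]
  | p :: s' => if cur <= f p then p :: ewis_from f (f p) s' else ewis_from f cur s'
  end.

Definition ewis (f : nat * nat -> nat) (s : seq (nat * nat)) : seq (nat * nat) :=
  match s with
  | [::] => [::]
  | p :: s' => p :: ewis_from f (f p) s'
  end.

(* The current shape is recorded by the current column heights h j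
   (boxes of column j are rows 1..h j).  The sequence of lowest boxes of
   columns l,...,lam_1, skipping empty columns: *)
Definition lowest_seq (lam : seq nat) (l : nat) (h : nat -> nat) : seq (nat * nat) :=
  [seq (j, h j) | j <- iota l (lam1 lam - l + 1) & 0 < h j].

Definition spath (T : nat -> nat -> nat) (lam : seq nat) (l : nat) (h : nat -> nat)
  : seq (nat * nat) :=
  ewis (fun p => T p.1 p.2) (lowest_seq lam l h).

(* delete the boxes of a path (each is the lowest box of its column) *)
Definition remove_path (P : seq (nat * nat)) (h : nat -> nat) : nat -> nat :=
  fun j => if j \in [seq p.1 | p <- P] then (h j).-1 else h j.

(* current shape after computing the first t paths P(T;l,c_l),...,P(T;l,c_l-t+1) *)
Fixpoint heights (T : nat -> nat -> nat) (lam : seq nat) (l t : nat) : nat -> nat :=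
  match t with
  | 0 => colht lam
  | t'.+1 => let h := heights T lam l t' in remove_path (spath T lam l h) h
  end.

Definition scan_path (T : nat -> nat -> nat) (lam : seq nat) (l k : nat)
  : seq (nat * nat) :=
  spath T lam l (heights T lam l (colht lam l - k)).

Definition most_recent_loc (P : seq (nat * nat)) (q : nat * nat) : option (nat * nat) :=
  let s := [seq p <- P | rlt p q] in
  match s with
  | [::] => None
  | p0 :: _ => Some (foldl (fun a p => if rlt a p then p else a) p0 s)
  end.

From mathcomp Require Import all_boot zify.

(* Let M_t be the largest entry, among the lowest boxes of the shape left after
   computing t scanning paths, that precedes (j,i) in reading order.  An EWIS
   keeps every running maximum of its sequence, so the most recent value of the
   next path relative to (j,i) is M_t.  Removing that path strictly lowers M_t:
   a lowest box of the new shape either sits directly above a removed box, and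
   its entry is smaller by column strictness, or it was skipped by the EWIS,
   and then an earlier box of the path carries a larger entry.  Since the
   column l is never emptied before P(T;l,1), M_t strictly decreases in t, and
   P(T;l,k) is the path computed after c_l - k others. *)

Lemma rlt_trans : transitive rlt.
Proof. by move=> [y1 y2] [x1 x2] [z1 z2]; rewrite /rlt /=; lia. Qed.

Lemma rltnn p : rlt p p = false.
Proof. by case: p => a b; rewrite /rlt /=; lia. Qed.

Section EWIS.

Variable f : nat * nat -> nat.

Lemma ewis_from_subseq c s : subseq (ewis_from f c s) s.
Proof.
elim: s c => //= x s IH c; case: ifP => _; first by rewrite eqxx.
exact: subseq_trans (IH c) (subseq_cons s x).
Qed.

Lemma ewis_subseq s : subseq (ewis f s) s.
Proof. by case: s => //= a s; rewrite eqxx ewis_from_subseq. Qed.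

Lemma last_ewis_from a s :
  f (last a (ewis_from f (f a) s)) = maxn (f a) (\max_(x <- s) f x).
Proof.
elim: s a => [|x s IH] a /=; first by rewrite big_nil maxn0.
by rewrite big_cons; case: leqP => le_ax /=; rewrite IH; lia.
Qed.

Variable e : rel (nat * nat).
Hypothesis e_trans : transitive e.

Lemma filter_ewis_from (P : pred (nat * nat)) c s :
    (forall x y, e x y -> P y -> P x) -> sorted e s ->
  filter P (ewis_from f c s) = ewis_from f c (filter P s).
Proof.
move=> P_down; elim: s c => //= x s IH c e_xs.
have e_s := path_sorted e_xs.
case Px: (P x) => /=; first by case: leqP => _ /=; rewrite ?Px IH.
have notP y : y \in s -> ~~ P y.
  move=> /(allP (order_path_min e_trans e_xs)) e_xy.
  by apply/negP => /(P_down _ _ e_xy); rewrite Px.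
have filter_nil s' : {subset s' <= s} -> filter P s' = [::].
  move=> sub_s; rewrite (eq_in_filter (a2 := pred0)) ?filter_pred0 //.
  by move=> y /sub_s /notP /negbTE.
rewrite (filter_nil s) //.
by case: ifP => _ /=; rewrite ?Px filter_nil // => y /(mem_subseq (ewis_from_subseq _ _)).
Qed.

Lemma ewis_from_skipped a s p :
    path e a s -> p \in s -> p \notin ewis_from f (f a) s ->
  exists2 y, y \in a :: s & e y p && (f p < f y).
Proof.
elim: s a => //= x s IH a /andP[e_ax e_xs]; rewrite inE.
case: leqP => [le_ax | lt_xa].
  rewrite inE negb_or => /orP[/eqP-> | p_s] /andP[/negP p_x p_new] //.
  have [y y_xs yp] := IH x e_xs p_s p_new.
  by exists y => //; rewrite inE y_xs orbT.
move=> /orP[/eqP-> _ | p_s p_new]; first by exists a; rewrite ?mem_head ?e_ax.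
have e_as : path e a s.
  rewrite path_min_sorted ?(path_sorted e_xs) //.
  by apply/allP => y /(allP (order_path_min e_trans e_xs)); exact: e_trans.
have [y y_as yp] := IH a e_as p_s p_new; exists y => //.
by move: y_as; rewrite !inE => /orP[-> | ->]; rewrite ?orbT.
Qed.

End EWIS.

Lemma foldl_latest a t :
  path rlt a t -> foldl (fun b p => if rlt b p then p else b) a t = last a t.
Proof. by elim: t a => //= y t IH a /andP[-> /IH]. Qed.

Lemma most_recent_loc_sorted P q a t :
  sorted rlt P -> filter (rlt^~ q) P = a :: t -> most_recent_loc P q = Some (last a t).
Proof.
move=> srt_P fP; rewrite /most_recent_loc fP /= rltnn foldl_latest //.
by rewrite -[path _ _ _]/(sorted rlt (a :: t)) -fP (subseq_sorted rlt_trans (filter_subseq _ _)).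
Qed.

Lemma most_recent_ewis f q a s : path rlt a s -> rlt a q ->
  exists2 p, most_recent_loc (ewis f (a :: s)) q = Some p
           & f p = \max_(x <- a :: s | rlt x q) f x.
Proof.
move=> srt_as aq; exists (last a (ewis_from f (f a) [seq x <- s | rlt x q])).
  apply: most_recent_loc_sorted.
    by apply: (subseq_sorted rlt_trans (ewis_subseq f (a :: s))).
  rewrite [filter _ _]/= aq (filter_ewis_from _ _ rlt_trans) ?(path_sorted srt_as) //.
  by move=> x y; exact: rlt_trans.
by rewrite last_ewis_from big_cons aq big_filter.
Qed.

Section LowestBoxes.

Variables (T : nat -> nat -> nat) (lam : seq nat) (l : nat).
Hypothesis l_col : 1 <= l <= lam1 lam.
Hypothesis col_strict :
  forall j i, box lam j i -> box lam j i.+1 -> T j i < T j i.+1.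

Local Notation entry p := (T p.1 p.2).

Definition lowest_max (H : nat -> nat) (q : nat * nat) : nat :=
  \max_(p <- lowest_seq lam l H | rlt p q) entry p.

Lemma mem_lowest_seq H p : (p \in lowest_seq lam l H) =
  [&& l <= p.1 <= lam1 lam, 0 < H p.1 & p.2 == H p.1].
Proof.
case: p => x y /=; apply/mapP/idP => [[z] | /and3P[x_rng Hx /eqP->]].
  by rewrite mem_filter mem_iota => /andP[Hz z_rng] [-> ->]; rewrite Hz eqxx; lia.
by exists x; rewrite // mem_filter mem_iota Hx; lia.
Qed.

Lemma lowest_seq_sorted H : sorted rlt (lowest_seq lam l H).
Proof.
rewrite sorted_map; apply: (sub_sorted (e := ltn)).
  by move=> a b ab; rewrite /rlt /= [_ < _]ab.
by apply: sorted_filter; [exact: ltn_trans | exact: iota_ltn_sorted].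
Qed.

Lemma lowest_seq_cons {H} : 0 < H l ->
  lowest_seq lam l H = (l, H l) :: behead (lowest_seq lam l H).
Proof. by move=> Hl; rewrite /lowest_seq addn1 /= Hl. Qed.

Lemma most_recent_spath {H q} : 0 < H l -> l < q.1 ->
  exists2 p, most_recent_loc (spath T lam l H) q = Some p & entry p = lowest_max H q.
Proof.
move=> Hl lq; rewrite /spath /lowest_max (lowest_seq_cons Hl).
apply: most_recent_ewis; last by rewrite /rlt /= lq.
by have := lowest_seq_sorted H; rewrite (lowest_seq_cons Hl).
Qed.

Lemma spath_subseq H : subseq (spath T lam l H) (lowest_seq lam l H).
Proof. exact: ewis_subseq. Qed.

Lemma mem_spath_col {H x} :
  x \in [seq p.1 | p <- spath T lam l H] -> (x, H x) \in spath T lam l H.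
Proof.
case/mapP=> p p_P ->; have := mem_subseq (spath_subseq H) p_P.
by rewrite mem_lowest_seq => /and3P[_ _ /eqP <-]; case: p p_P.
Qed.

Lemma lowest_skipped {H p} : 0 < H l ->
    p \in lowest_seq lam l H -> p \notin spath T lam l H ->
  exists2 y, y \in lowest_seq lam l H & rlt y p && (entry p < entry y).
Proof.
move=> Hl; rewrite /spath (lowest_seq_cons Hl) /= !inE negb_or.
move=> /orP[/eqP-> | p_s] /andP[p_l p_new]; first by rewrite eqxx in p_l.
have srt := lowest_seq_sorted H; rewrite (lowest_seq_cons Hl) in srt.
exact: ewis_from_skipped _ _ rlt_trans _ _ _ srt p_s p_new.
Qed.

Variable H : nat -> nat.
Hypothesis H_le : forall x, H x <= colht lam x.
Hypothesis Hl : 0 < H l.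

Local Notation H' := (remove_path (spath T lam l H) H).

Lemma lowest_remove_path_lt {q p} :
  p \in lowest_seq lam l H' -> rlt p q -> entry p < lowest_max H q.
Proof.
rewrite mem_lowest_seq /remove_path; case: p => x y /= /and3P[x_rng].
case: ifP => [x_P | x_notP] Hx /eqP-> pq.
  have xHx_P := mem_spath_col x_P.
  have xHx := mem_subseq (spath_subseq H) xHx_P.
  have xHx_q : rlt (x, H x) q by move: pq; rewrite /rlt /=; lia.
  apply: leq_trans (leq_bigmax_seq _ xHx xHx_q).
  have Hx_pos : 0 < H x by lia.
  rewrite /= -{2}(prednK Hx_pos); apply: col_strict; rewrite /box; have := H_le x; lia.
have xHx : (x, H x) \in lowest_seq lam l H by rewrite mem_lowest_seq /= eqxx; lia.
have xHx_P : (x, H x) \notin spath T lam l H.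
  by apply: contraFN x_notP => /(map_f fst).
have [z z_low /andP[zx lt_xz]] := lowest_skipped Hl xHx xHx_P.
exact: leq_trans lt_xz (leq_bigmax_seq _ z_low (rlt_trans _ _ _ zx pq)).
Qed.

Lemma lowest_max_remove_path q : l < q.1 -> 0 < H' l ->
  lowest_max H' q < lowest_max H q.
Proof.
move=> lq Hl'.
have l_low : (l, H' l) \in lowest_seq lam l H' by rewrite mem_lowest_seq /= eqxx; lia.
have l_q : rlt (l, H' l) q by rewrite /rlt /= lq.
have M_pos := lowest_remove_path_lt l_low l_q.
rewrite -(ltn_predK M_pos) ltnS; apply/bigmax_leqP_seq => p p_low pq.
by rewrite -ltnS (ltn_predK M_pos) lowest_remove_path_lt.
Qed.

End LowestBoxes.

Lemma heights_le T lam l t x : heights T lam l t x <= colht lam x.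
Proof.
elim: t => //= t IH; rewrite /remove_path; case: ifP => // _.
exact: leq_trans (leq_pred _) IH.
Qed.

Lemma heights_col T lam l t : t <= colht lam l ->
  heights T lam l t l = colht lam l - t.
Proof.
elim: t => [|t IH] lt_tc; first by rewrite subn0.
have Hl : 0 < heights T lam l t l by rewrite IH ?subn_gt0 // ltnW.
rewrite /= /remove_path /spath (lowest_seq_cons _ _ Hl) /= inE eqxx /= IH ?subnS //.
exact: ltnW.
Qed.

Lemma heights_col_gt0 T lam l t : t < colht lam l -> 0 < heights T lam l t l.
Proof. by move=> lt_tc; rewrite heights_col ?subn_gt0 // ltnW. Qed.

Lemma lowest_max_heights_decreasing T lam l q t1 t2 :
    1 <= l <= lam1 lam ->
    (forall j i, box lam j i -> box lam j i.+1 -> T j i < T j i.+1) ->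
    l < q.1 -> t1 < t2 < colht lam l ->
  lowest_max T lam l (heights T lam l t2) q < lowest_max T lam l (heights T lam l t1) q.
Proof.
move=> l_col col_strict lq /andP[lt_t12 lt_t2c].
pose f t := lowest_max T lam l (heights T lam l t) q.
apply: (homo_ltn_in (D := [pred t | t < colht lam l]) (f := f) (r := fun a b => b < a)).
- by move=> y x z xy zy; exact: ltn_trans zy xy.
- by move=> a b _ b_c k /andP[_ kb]; exact: ltn_trans kb b_c.
- move=> t lt_tc lt_t1c; apply: lowest_max_remove_path => //.
  + by move=> x; exact: heights_le.
  + exact: heights_col_gt0.
  + exact: (heights_col_gt0 T lam l t.+1).
- exact: ltn_trans lt_t12 lt_t2c.
- exact: lt_t2c.
- exact: lt_t12.
Qed.

Theorem lemma3p1 (n : nat) (lam : seq nat) (T : nat -> nat -> nat)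
    (l j i h k : nat) :
  0 < n ->
  size lam = n ->
  sorted geq lam ->
  nth 0 lam n.-1 = 0 ->
  has (fun x => 0 < x) lam ->
  is_sst n lam T ->
  1 <= l < lam1 lam ->
  box lam j i ->
  rlt (l, 1) (j, i) ->
  1 <= h -> h < k -> k <= colht lam l ->
  exists p q : nat * nat,
    most_recent_loc (scan_path T lam l h) (j, i) = Some p /\
    most_recent_loc (scan_path T lam l k) (j, i) = Some q /\
    T p.1 p.2 < T q.1 q.2.
Proof.
move=> _ _ _ _ _ [_ [_ col_strict]] l_rng ji_box l1_ji h_pos lt_hk le_kc.
have l_col : 1 <= l <= lam1 lam by lia.
have lt_lj : l < (j, i).1 by move: ji_box l1_ji; rewrite /box /rlt /=; lia.
have lt_hc : colht lam l - h < colht lam l by lia.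
have lt_kc : colht lam l - k < colht lam l by lia.
have [p p_rec p_max] := most_recent_spath T lam l (heights_col_gt0 T lam l _ lt_hc) lt_lj.
have [q q_rec q_max] := most_recent_spath T lam l (heights_col_gt0 T lam l _ lt_kc) lt_lj.
exists p, q; rewrite p_max q_max; do !split => //.
apply: lowest_max_heights_decreasing => //; lia.
Qed.
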